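(* For all positive integers $n$, $\det A(n)=1$.
   Context: For a positive integer $n$, the $n\times n$ matrix $A(n)=(A_{n,i,j})_{0\le i,j\le n-1}$ (entries rational functions in indeterminates $x,y$) is defined by $A_{n,i,j}=\frac{(1+x)(1+y)}{xy}$ if $i=j<n-1$; $A_{n,i,j}=-\frac1{xy}$ if $i=j-1<n-1$; $A_{n,n-1,n-1}=\frac{xy-(n-1)(x+y)}{xy}$; for $i=n-1$ and $j<n-1$, $$A_{n,n-1,j}=\frac{(-1)^{n+j}}{xy}\sum_{l=j}^{n}\left(\binom lj\binom{n+j-1-l}{j}x^{l-j}y^{n-1-l}+\binom lj\binom{n+j-l}{j}x^{l-j}y^{n-l}\right);$$ and $A_{n,i,j}=0$ otherwise. Binomial coefficients $\binom ab$ are $0$ if $b<0$ or $a<b$. *)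

(* The field Q(x,y) of rational functions in two
   indeterminates is {fraction {poly {poly rat}}}, with x the inner
   variable ('X%:P) and y the outer variable ('X). *)
From HB Require Import structures.
From mathcomp Require Import all_boot all_order all_algebra.
Set Implicit Arguments. Unset Strict Implicit. Unset Printing Implicit Defensive.
Import Order.TTheory GRing.Theory Num.Theory.
Local Open Scope ring_scope.

Definition Fxy := {fraction {poly {poly rat}}}.
Definition xF : Fxy := FracField.tofrac ('X%:P : {poly {poly rat}}).
Definition yF : Fxy := FracField.tofrac ('X : {poly {poly rat}}).

Definition binZ (a b : int) : nat :=
  match a, b with
  | Posz a', Posz b' => 'C(a', b')
  | _, _ => 0%N
  end.

(* The summand of the last row, l ranging over j..n; exponents are in int
   (exprz) since n-1-l may be -1 (the corresponding binomial is then 0). *)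
Definition lastrow_term (n j l : nat) : Fxy :=
  (binZ l j * binZ (n%:Z + j%:Z - 1 - l%:Z) j)%:R
     * xF ^ (l%:Z - j%:Z) * yF ^ (n%:Z - 1 - l%:Z)
  + (binZ l j * binZ (n%:Z + j%:Z - l%:Z) j)%:R
     * xF ^ (l%:Z - j%:Z) * yF ^ (n%:Z - l%:Z).

Definition Aentry (n i j : nat) : Fxy :=
  if (i == j) && (i < n.-1)%N then (1 + xF) * (1 + yF) / (xF * yF)
  else if (i.+1 == j) && (i < n.-1)%N then - (xF * yF)^-1
  else if (i == n.-1) && (j == n.-1) then (xF * yF - (n.-1)%:R * (xF + yF)) / (xF * yF)
  else if (i == n.-1) && (j < n.-1)%N then
    (-1) ^+ (n + j) / (xF * yF) * \sum_(j <= l < n.+1) lastrow_term n j l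
  else 0.

Definition A (n : nat) : 'M[Fxy]_n := \matrix_(i < n, j < n) Aentry n i j.

From HB Require Import structures.
From mathcomp Require Import all_boot all_order all_algebra.
From mathcomp Require Import zify ring.
Set Implicit Arguments. Unset Strict Implicit. Unset Printing Implicit Defensive.
Import Order.TTheory GRing.Theory Num.Theory.
Local Open Scope ring_scope.

(* Rows 0..n-2 of A(n) are a e_i + b e_(i+1) with a = u/(xy), b = -1/(xy) and
   u = (1+x)(1+y); right-multiplying by a unit triangular matrix reduces det A(n)
   to a^(n-1) times the last row weighted by powers of -b/a = 1/u.  The last-row
   sums are coefficients of D_j(t) = ((1-xt)(1-yt))^-(j+1), so the weighted sum is
   governed by the generating function
     sum_j (-ut)^j D_j(t) = 1/((1-xt)(1-yt) + ut) = 1/((1+t)(1+xyt)),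
   whose product with 1+t has coefficients (-xy)^k. *)


Section PolyTruncation.
Variable R : comNzRingType.
Implicit Types (p q : {poly R}) (N : nat).

Lemma take_polyMr N p q : take_poly N (p * take_poly N q) = take_poly N (p * q).
Proof.
by rewrite -[in RHS](poly_take_drop N q) mulrDr mulrA take_polyD take_polyMXn_0 addr0.
Qed.

Lemma take_polyMl N p q : take_poly N (take_poly N p * q) = take_poly N (p * q).
Proof. by rewrite mulrC take_polyMr mulrC. Qed.

Lemma coef_1subCX c p i :
  ((1 - c%:P * 'X) * p)`_i = p`_i - (if i is i'.+1 then c * p`_i' else 0).
Proof. by rewrite mulrBl mul1r -mulrA coefB coefCM coefXM; case: i; rewrite ?mulr0. Qed.

Lemma coef_1addCX c p i :
  ((1 + c%:P * 'X) * p)`_i = p`_i + (if i is i'.+1 then c * p`_i' else 0).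
Proof. by rewrite mulrDl mul1r -mulrA coefD coefCM coefXM; case: i; rewrite ?mulr0. Qed.

End PolyTruncation.

Section NegativeBinomial.
Variable R : comNzRingType.

(* The truncation mod X^N of (1 - cX)^-(j+1). *)
Definition negbin_series (c : R) (j N : nat) : {poly R} :=
  \poly_(a < N) ('C(j + a, a)%:R * c ^+ a).

Lemma negbin_seriesS c j N :
  take_poly N ((1 - c%:P * 'X) * negbin_series c j.+1 N) = negbin_series c j N.
Proof.
apply/polyP => i; rewrite coef_take_poly coef_1subCX /negbin_series !coef_poly.
case: ltnP => // hi; case: i hi => [|i] hi; first by rewrite !bin0 subr0.
rewrite coef_poly (ltnW hi) exprS addSn binS natrD -addSnnS; ring.
Qed.

Lemma negbin_series0 c N :
  take_poly N ((1 - c%:P * 'X) * negbin_series c 0 N) = take_poly N 1.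
Proof.
apply/polyP => i; rewrite !coef_take_poly coef_1subCX coef_poly coef1.
case: ltnP => // hi; case: i hi => [|i] hi; first by rewrite subr0 binn mul1r.
by rewrite coef_poly (ltnW hi) !add0n !binn !mul1r exprS subrr.
Qed.

End NegativeBinomial.

Section SeriesIdentity.
Variables (R : comNzRingType) (x y : R).
Let u := (1 + x) * (1 + y).

Definition negbin2_series j N := negbin_series x j N * negbin_series y j N.

Definition negbin2_coef j k :=
  \sum_(a < k.+1) 'C(j + a, a)%:R * x ^+ a * ('C(j + (k - a), k - a)%:R * y ^+ (k - a)).

Lemma coef_negbin2_series j N k : (k < N)%N -> (negbin2_series j N)`_k = negbin2_coef j k.
Proof.
move=> hk; rewrite coefM; apply: eq_bigr => -[a /= ha] _; rewrite !coef_poly.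
by rewrite (leq_ltn_trans _ hk) ?(leq_ltn_trans (leq_subr a k) hk).
Qed.

Lemma negbin2_coef0 j : negbin2_coef j 0 = 1.
Proof. by rewrite /negbin2_coef big_ord1 /= !addn0 !bin0 !mulr1. Qed.

Lemma negbin2_coef1 j : negbin2_coef j 1 = j.+1%:R * (x + y).
Proof.
by rewrite /negbin2_coef !big_ord_recr big_ord0 /= !addn0 !addn1 subn0 subnn !bin1 !bin0; ring.
Qed.

Let P : {poly R} := (1 - x%:P * 'X) * (1 - y%:P * 'X).

Lemma negbin2_seriesS j N :
  take_poly N (P * negbin2_series j.+1 N) = take_poly N (negbin2_series j N).
Proof.
by rewrite mulrACA -take_polyMl -take_polyMr !negbin_seriesS.
Qed.

Lemma negbin2_series0 N : take_poly N (P * negbin2_series 0 N) = take_poly N 1.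
Proof.
by rewrite mulrACA -take_polyMl -take_polyMr !negbin_series0 take_polyMr take_polyMl mul1r.
Qed.

Definition negbin2_gen N := \sum_(j < N) ((- u)%:P * 'X) ^+ j * negbin2_series j N.

Lemma take_negbin2_gen N :
  take_poly N ((1 + 'X) * (1 + (x * y)%:P * 'X) * negbin2_gen N) = take_poly N 1.
Proof.
case: N => [|N]; first by rewrite !take_poly0l.
set E := fun j => ((- u)%:P * 'X) ^+ j * negbin2_series j N.+1.
have -> : (1 + 'X) * (1 + (x * y)%:P * 'X) = P + u%:P * 'X.
  by rewrite /P /u !(polyCM, polyCD, polyC1); ring.
have E0 : take_poly N.+1 (P * E 0%N) = take_poly N.+1 1.
  by rewrite /E expr0 mul1r negbin2_series0.
have ES j : take_poly N.+1 (P * E j.+1) = - take_poly N.+1 (u%:P * 'X * E j).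
  rewrite /E mulrCA -[LHS]take_polyMr negbin2_seriesS take_polyMr exprS -linearN.
  by rewrite !mulrA polyCN !mulNr.
have Elast : take_poly N.+1 (u%:P * 'X * E N) = 0.
  suff -> : u%:P * 'X * E N = u%:P * (- u)%:P ^+ N * negbin2_series N N.+1 * 'X^(N.+1).
    exact: take_polyMXn_0.
  by rewrite /E exprMn exprS; ring.
rewrite mulr_sumr take_poly_sum.
under eq_bigr do rewrite mulrDl take_polyD.
rewrite big_split /= big_ord_recl big_ord_recr /= E0 Elast addr0.
under eq_bigr do rewrite /bump /= add1n ES.
by rewrite sumrN addrNK.
Qed.

Lemma coef_1X_negbin2_gen N i : (i < N)%N ->
  ((1 + 'X) * negbin2_gen N)`_i = (- (x * y)) ^+ i.
Proof.
set H := (1 + 'X) * _.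
have hH k : (k < N)%N -> ((1 + (x * y)%:P * 'X) * H)`_k = (k == 0)%:R.
  move=> hk; have := congr1 (fun p : {poly R} => p`_k) (take_negbin2_gen N).
  by rewrite /H mulrAC mulrC !coef_take_poly hk coef1.
elim: i => [|i IH] hi; first by have := hH _ hi; rewrite coef_1addCX addr0.
have := hH _ hi; rewrite coef_1addCX IH ?(ltnW hi) // => /eqP.
by rewrite addr_eq0 => /eqP ->; rewrite exprS mulNr.
Qed.

Lemma coef_negbin2_gen N m : (negbin2_gen N)`_m =
  \sum_(j < N) (- u) ^+ j * (if (m < j)%N then 0 else (negbin2_series j N)`_(m - j)).
Proof.
rewrite coef_sum; apply: eq_bigr => j _.
by rewrite exprMn -polyC_exp -mulrA coefCM coefXnM.
Qed.

Lemma negbin2_coef_sum n :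
  \sum_(j < n.+1) (-1) ^+ (n + j) * u ^+ j *
    (negbin2_coef j (n - j) + (if (j < n)%N then negbin2_coef j (n.-1 - j) else 0))
  = (x * y) ^+ n.
Proof.
have := coef_1X_negbin2_gen (ltnSn n).
rewrite mulrDl mul1r coefD coefXM => h.
rewrite -[RHS](signrMK n) -exprNn -h !coef_negbin2_gen.
have -> : (if n == 0%N then 0 else \sum_(j < n.+1) (- u) ^+ j *
      (if (n.-1 < j)%N then 0 else (negbin2_series j n.+1)`_(n.-1 - j))) =
    \sum_(j < n.+1) (- u) ^+ j *
      (if (j < n)%N then (negbin2_series j n.+1)`_(n.-1 - j) else 0).
  case: {h} n => [|n] /=; first by rewrite big1 // => j _; rewrite mulr0.
  by apply: eq_bigr => j _; rewrite ltnS; case: leqP.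
rewrite -big_split mulr_sumr; apply: eq_bigr => -[j /=]; rewrite ltnS => hj _.
rewrite [(n < j)%N]ltnNge hj /= !coef_negbin2_series ?ltnS ?leq_subr //.
- by rewrite (exprNn u) exprD; case: ifP => _; ring.
- by rewrite leq_subLR (leq_trans (leq_pred n)) ?leq_addl.
Qed.
End SeriesIdentity.

Lemma det_bidiag_lastrow (F : fieldType) m (a b : F) (M : 'M[F]_m.+1) : a != 0 ->
  (forall i j : 'I_m.+1, (i < m)%N ->
     M i j = if i == j :> nat then a else if i.+1 == j :> nat then b else 0) ->
  \det M = a ^+ m * \sum_(k < m.+1) M ord_max k * (- b / a) ^+ (m - k).
Proof.
(* Right-multiplying by the unit upper triangular C = (r^(j-k)) with a r + b = 0
   clears the superdiagonal, so M C is lower triangular. *)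
move=> a0 hM; set r := - b / a.
pose c k j : F := if (k <= j)%N then r ^+ (j - k) else 0.
pose C : 'M[F]_m.+1 := \matrix_(k, j) c k j.
have detC : \det C = 1.
  rewrite -det_tr det_trig; last by apply/is_trig_mxP => i j ij; rewrite !mxE /c leqNgt ij.
  by rewrite big1 // => i _; rewrite !mxE /c leqnn subnn.
have MC_row (i j : 'I_m.+1) : (i < m)%N -> (M *m C) i j = a * c i j + b * c i.+1 j.
  move=> im; rewrite mxE; under eq_bigr => k _ do rewrite hM // mxE.
  transitivity (\sum_(k < m.+1 | k == i :> nat) a * c k j +
                \sum_(k < m.+1 | k == i.+1 :> nat) b * c k j).
    rewrite !(big_mkcond (fun k : 'I__ => _ == _)) -big_split.
    apply: eq_bigr => k _; rewrite ![_ == k :> nat]eq_sym.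
    case: eqP => [->|_]; first by rewrite (ltn_eqF (ltnSn i)) /= addr0.
    by case: eqP; rewrite /= ?add0r ?mul0r.
  rewrite (big_ord1_eq _ (fun k => a * c k j)) (big_ord1_eq _ (fun k => b * c k j)).
  by rewrite ltn_ord ltnS im.
have MC_trig : is_trig_mx (M *m C).
  apply/is_trig_mxP => i j ij.
  have im : (i < m)%N by rewrite (leq_trans ij) // -ltnS.
  have ar : a * r = - b by rewrite mulrC divfK.
  by rewrite MC_row // /c (ltnW ij) ij -(subnSK ij) exprS mulrA ar mulNr addNr.
rewrite -[\det M]mulr1 -detC -det_mulmx det_trig // big_ord_recr /=.
congr (_ * _).
  rewrite -[X in a ^+ X]card_ord -prodr_const; apply: eq_bigr => i _.
  by rewrite MC_row //= /c leqnn subnn ltnn mulr0 addr0 mulr1.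
by rewrite mxE; apply: eq_bigr => k _; rewrite mxE /c -ltnS ltn_ord.
Qed.

Lemma lastrow_weighted_sum (F : fieldType) (x y : F) m (L : 'I_m.+1 -> F) :
  x != 0 -> y != 0 -> (1 + x) * (1 + y) != 0 ->
  (forall k : 'I_m.+1, (k < m)%N -> L k = (-1) ^+ (m.+1 + k) / (x * y) *
     (negbin2_coef x y k (m.+1 - k) + negbin2_coef x y k (m - k))) ->
  L ord_max = (x * y - m%:R * (x + y)) / (x * y) ->
  ((1 + x) * (1 + y) / (x * y)) ^+ m *
    \sum_(k < m.+1) L k * ((1 + x) * (1 + y))^-1 ^+ (m - k) = 1.
Proof.
move=> x0 y0; set u := (1 + x) * (1 + y) => u0 hL hLm.
have := negbin2_coef_sum x y m.+1; rewrite !big_ord_recr /=.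
rewrite ltnn ltnSn !subnn subSnn negbin2_coef1 !negbin2_coef0 addr0 => hS.
have sq : (-1) ^+ (m + m) = 1 :> F by rewrite exprD -expr2 sqrr_sign.
rewrite !addSn addnS !(exprS (-1)) sq in hS.
have -> : \sum_(k < m) L (widen_ord (leqnSn m) k) * u^-1 ^+ (m - k) =
    ((x * y) ^+ m.+1 + u ^+ m * (m.+1%:R * (x + y) + 1) - u ^+ m.+1) / (x * y * u ^+ m).
  rewrite -[(x * y) ^+ m.+1]hS.
  set S := \sum_(i < m) ((-1) ^+ _ * _ * _).
  transitivity (S / (x * y * u ^+ m)); last by ring.
  rewrite mulr_suml; apply: eq_bigr => k _.
  have km : (k <= m)%N := ltnW (ltn_ord k).
  rewrite hL //= ltnS km exprVn -[in u ^+ m](subnK km) (exprD u) -/u.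
  by field; rewrite x0 y0 !expf_neq0.
rewrite hLm expr0 mulr1 expr_div_n (exprS (x * y)) (exprS u) -natr1.
have U0 : u ^+ m != 0 by rewrite expf_neq0.
have X0 : (x * y) ^+ m != 0 by rewrite expf_neq0 // mulf_neq0.
move: U0 X0; set U := u ^+ m; set X := (x * y) ^+ m => U0 X0.
by rewrite /u; field; rewrite x0 y0 U0 X0.
Qed.

Lemma bin_add_sym m n : 'C(m + n, m) = 'C(m + n, n).
Proof. by rewrite -bin_sub ?leq_addr // addKn. Qed.

(* lastrow_term (n+1) is the sum of the halves for N = n and N = n + 1; each half
   is the l-th term of a coefficient of ((1-xt)(1-yt))^-(j+1). *)
Definition lastrow_half (N j l : nat) : Fxy :=
  (binZ l j * binZ (N%:Z + j%:Z - l%:Z) j)%:R * xF ^ (l%:Z - j%:Z) * yF ^ (N%:Z - l%:Z).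

Lemma lastrow_termE n j l :
  lastrow_term n.+1 j l = lastrow_half n j l + lastrow_half n.+1 j l.
Proof.
rewrite /lastrow_term /lastrow_half.
have -> : n.+1%:Z + j%:Z - 1 - l%:Z = n%:Z + j%:Z - l%:Z by lia.
by have -> : n.+1%:Z - 1 - l%:Z = n%:Z - l%:Z by lia.
Qed.

Lemma lastrow_half_top N j : lastrow_half N j N.+1 = 0.
Proof.
rewrite /lastrow_half; case: j => [|j].
  have -> : N%:Z + 0%:Z - N.+1%:Z = Negz 0 by lia.
  by rewrite /= muln0 !mul0r.
have -> : N%:Z + j.+1%:Z - N.+1%:Z = j%:Z by lia.
by rewrite /= (bin_small (ltnSn j)) muln0 !mul0r.
Qed.

Lemma sum_lastrow_half N j : (j <= N)%N ->
  \sum_(j <= l < N.+1) lastrow_half N j l = negbin2_coef xF yF j (N - j).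
Proof.
move=> jN; rewrite -{1}[j]add0n big_addn big_mkord subSn //.
apply: eq_bigr => -[a /=]; rewrite ltnS => ha _.
rewrite /lastrow_half.
have -> : (a + j)%N%:Z - j%:Z = a%:Z by lia.
have -> : N%:Z + j%:Z - (a + j)%N%:Z = (j + (N - j - a))%N%:Z by lia.
have -> : N%:Z - (a + j)%N%:Z = (N - j - a)%N%:Z by lia.
by rewrite /= -!exprnP natrM [(a + j)%N]addnC !bin_add_sym; ring.
Qed.

Lemma sum_lastrow_term n j : (j <= n)%N ->
  \sum_(j <= l < n.+2) lastrow_term n.+1 j l
  = negbin2_coef xF yF j (n.+1 - j) + negbin2_coef xF yF j (n - j).
Proof.
move=> jn; under eq_bigr do rewrite lastrow_termE.
rewrite big_split /= big_nat_recr ?(leq_trans jn) //= lastrow_half_top addr0.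
by rewrite !sum_lastrow_half ?(leq_trans jn) // addrC.
Qed.

Local Notation uF := ((1 + xF) * (1 + yF)).

Lemma poly_1addX_neq0 (R : nzRingType) : (1 + 'X : {poly R}) != 0.
Proof. by rewrite addrC -polyC1 -size_poly_eq0 size_XaddC. Qed.

Lemma xF_neq0 : xF != 0.
Proof. by rewrite tofrac_eq0 polyC_eq0 polyX_eq0. Qed.

Lemma yF_neq0 : yF != 0.
Proof. by rewrite tofrac_eq0 polyX_eq0. Qed.

Lemma uF_neq0 : uF != 0.
Proof.
rewrite mulf_neq0 // -tofrac1 -tofracD tofrac_eq0 ?poly_1addX_neq0 //.
by rewrite -polyC1 -polyCD polyC_eq0 poly_1addX_neq0.
Qed.

Lemma A_upper m (i j : 'I_m.+1) : (i < m)%N ->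
  A m.+1 i j = if i == j :> nat then uF / (xF * yF)
               else if i.+1 == j :> nat then - (xF * yF)^-1 else 0.
Proof. by move=> im; rewrite mxE /Aentry /= im !andbT (ltn_eqF im). Qed.

Lemma A_lastrow m (j : 'I_m.+1) : (j < m)%N ->
  A m.+1 ord_max j = (-1) ^+ (m.+1 + j) / (xF * yF) *
    (negbin2_coef xF yF j (m.+1 - j) + negbin2_coef xF yF j (m - j)).
Proof.
move=> jm; rewrite mxE /Aentry /= ltnn !andbF eqxx (ltn_eqF jm) jm /=.
by rewrite sum_lastrow_term // ltnW.
Qed.

Lemma A_corner m :
  A m.+1 ord_max ord_max = (xF * yF - m%:R * (xF + yF)) / (xF * yF).
Proof. by rewrite mxE /Aentry /= ltnn !andbF eqxx. Qed.

Theorem lemma6 (n : nat) : (0 < n)%N -> \det (A n) = 1.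
Proof.
case: n => // m _.
have xy0 : xF * yF != 0 := mulf_neq0 xF_neq0 yF_neq0.
rewrite (det_bidiag_lastrow (a := uF / (xF * yF)) (b := - (xF * yF)^-1)).
- rewrite opprK invf_div mulrA mulVf // mul1r.
  exact: lastrow_weighted_sum xF_neq0 yF_neq0 uF_neq0 (@A_lastrow m) (A_corner m).
- exact: mulf_neq0 uF_neq0 (invr_neq0 xy0).
- exact: A_upper.
Qed.
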